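(* Let $(V,\|\cdot\|_V)$ be a normed vector space, $\mathcal{F},\Theta$ compact topological spaces with topologies generated by (pseudo-)metrics, and $E\colon V\times\mathcal{F}\times\Theta\to\mathbb{R}$ satisfying (EC) [for each $v$, $E(v,\cdot,\cdot)$ is continuous on $\mathcal{F}\times\Theta$] and (Lip) [for some $L\ge0$, each $E(\cdot,f,\theta)$ is $L$-Lipschitz on $V$]. Let $\bar v\in V$, $U\subseteq V$ convex, and $T_{\bar v}U:=\mathrm{cl}\{(v-\bar v)/t:t>0,v\in U\}$. Assume (Lin) for each $(f,\theta)$ the map $\Delta_{\bar v}E(\cdot,f,\theta)\colon V\to\mathbb{R}$, $v\mapsto E(\bar v+v,f,\theta)-E(\bar v,f,\theta)$, is linear; (DC) for each $h\in T_{\bar v}U$, the function $\theta\mapsto\sup_{f\in S(\bar v,\theta)}\Delta_{\bar v}E(h,f,\theta)$ is lower semi-continuous on $\Theta$. Then $\Psi\colon V\to C(\Theta)$, $\Psi(v)=(\sup_{f\in\mathcal{F}}E(v,f,\theta))_{\theta\in\Theta}$, is Hadamard directionally differentiable at $\bar v$ tangentially to $U$, with derivative $$D^H_{\bar v}\Psi\colon T_{\bar v}U\to C(\Theta),\quad h\mapsto\Big(\sup_{f\in S(\bar v,\theta)}\Delta_{\bar v}E(h,f,\theta)\Big)_{\theta\in\Theta},$$ i.e., for all $t_n\searrow0$ and $h_n\to h\in T_{\bar v}U$ with $\bar v+t_nh_n\in U$, $\|(\Psi(\bar v+t_nh_n)-\Psi(\bar v))/t_n-D^H_{\bar v}\P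si(h)\|_{C(\Theta)}\to0$.
   Context: $S(\bar v,\theta):=\{f\in\mathcal{F}:E(\bar v,f,\theta)=\sup_{f'\in\mathcal{F}}E(\bar v,f',\theta)\}$. $C(\Theta)$: bounded continuous real functions on $\Theta$ with uniform norm; $\mathrm{cl}$ denotes closure in $V$. *)

From HB Require Import structures.
From mathcomp Require Import all_boot all_order all_algebra.
From mathcomp Require Import all_classical all_reals all_analysis.
Set Implicit Arguments. Unset Strict Implicit. Unset Printing Implicit Defensive.
Import Order.TTheory GRing.Theory Num.Theory.
Import numFieldNormedType.Exports.
Local Open Scope classical_set_scope.
Local Open Scope ring_scope.

Definition rsup {R : realType} {T : Type} (A : set T) (g : T -> R) : R :=
  sup [set g x | x in A].

Definition unorm {R : realType} {T : Type} (g : T -> R) : R :=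
  rsup [set: T] (fun x => `|g x|).

Definition lsc {R : realType} {T : topologicalType} (g : T -> R) : Prop :=
  forall x (e : R), 0 < e -> \forall y \near x, g x - e < g y.

Definition PsiE {R : realType} {V F Th : Type} (E : V -> F -> Th -> R)
  (v : V) (th : Th) : R := rsup [set: F] (fun f => E v f th).

Definition Smax {R : realType} {V F Th : Type} (E : V -> F -> Th -> R)
  (v : V) (th : Th) : set F := [set f | E v f th = PsiE E v th].

Definition DeltaE {R : realType} {V : normedModType R} {F Th : Type}
  (E : V -> F -> Th -> R) (vbar h : V) (f : F) (th : Th) : R :=
  E (vbar + h) f th - E vbar f th.

Definition tcone {R : realType} {V : normedModType R} (vbar : V) (U : set V)
  : set V :=
  closure [set t^-1 *: (v - vbar) | t in [set t : R | 0 < t] & v in U].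

Definition DPsi {R : realType} {V : normedModType R} {F Th : Type}
  (E : V -> F -> Th -> R) (vbar h : V) (th : Th) : R :=
  rsup (Smax E vbar th) (fun f => DeltaE E vbar h f th).

From HB Require Import structures.
From mathcomp Require Import all_boot all_order all_algebra.
From mathcomp Require Import all_classical all_reals all_analysis.
From mathcomp Require Import ring lra.
Import Order.TTheory GRing.Theory Num.Theory.
Import numFieldNormedType.Exports.
Local Open Scope classical_set_scope.
Local Open Scope ring_scope.

(* Write G := E(vbar) and D_h := Delta_vbar E(h).  By (Lin) and (Lip),
   E(vbar + t h_n) = G + t D_h + r_n with |r_n| <= t L |h_n - h|, so the
   theorem reduces to two facts about a jointly continuous G and a continuous
   bounded D on the compact product F x Theta.
   1. Semicontinuity of the argmax: near (th0, 0), every |d|-almost maximiser f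
      of G(., th) satisfies D f th < dsup G D th0 + e, where dsup G D th is the
      sup of D(., th) over the maximisers of G(., th).  Hence dsup is upper
      semicontinuous; when it is also lower semicontinuous (assumption (DC))
      it is continuous and, Theta being compact, the bound holds for a single
      d uniformly in th.
   2. Perturbation of a maximum: if |K - G - t D| <= t m, then the quotient
      (sup K - sup G) / t is at least dsup G D - m and at most D c + m for a
      maximiser c of K, which is itself an almost maximiser of G. *)

Section RealSup.
Context {R : realType} {T : Type}.

Lemma rsup_ge (A : set T) (g : T -> R) M x :
  (forall y, A y -> g y <= M) -> A x -> g x <= rsup A g.
Proof.
move=> gM Ax; apply: sup_upper_bound; last by exists x.
split; first by exists (g x), x.
by exists M => _ [y Ay <-]; exact: gM.
Qed.

Lemma rsup_le (A : set T) (g : T -> R) M :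
  A !=set0 -> (forall y, A y -> g y <= M) -> rsup A g <= M.
Proof.
move=> [x Ax] gM; apply: ge_sup; first by exists (g x), x.
by move=> _ [y Ay <-]; exact: gM.
Qed.

Lemma rsup_max (A : set T) (g : T -> R) x :
  A x -> (forall y, A y -> g y <= g x) -> rsup A g = g x.
Proof.
move=> Ax gx; apply/le_anti/andP; split.
  by apply: rsup_le => //; exists x.
exact: rsup_ge A g (g x) x gx Ax.
Qed.

Lemma rsup_empty (A : set T) (g : T -> R) :
  ~ ([set: T] !=set0) -> rsup A g = 0.
Proof.
move=> T0; have -> : A = set0.
  by apply/seteqP; split => // x _; apply: T0; exists x.
by rewrite /rsup image_set0 sup0.
Qed.

Lemma unorm_le (g : T -> R) e :
  0 <= e -> (forall x, `|g x| <= e) -> `|unorm g| <= e.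
Proof.
move=> e0 ge; have [[x _]|T0] := pselect ([set: T] !=set0).
  have unorm_ge : `|g x| <= unorm g.
    exact: (rsup_ge [set: T] (fun y => `|g y|) e x (fun y _ => ge y)).
  rewrite ger0_norm ?(le_trans _ unorm_ge) //.
  by apply: rsup_le => //; exists x.
by rewrite /unorm rsup_empty ?normr0.
Qed.
End RealSup.

Lemma near_forall_compact {X : topologicalType} {I : Type} (FI : set_system I)
  {FI_filter : Filter FI} (P : I -> X -> Prop) : compact [set: X] ->
  (forall x : X, \forall x' \near x & i \near FI, P i x') ->
  \forall i \near FI, forall x, P i x.
Proof.
move=> cX locP.
have := (iffLR (compact_near_coveringP [set: X])) cX I FI P FI_filter.
by move=> /(_ (fun x _ => locP x)); apply: filterS => i Pi x; exact: Pi.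
Qed.

Section MaxOverCompact.
Context {R : realType} {F Th : topologicalType}.
Variable G : F -> Th -> R.
Hypothesis cF : compact [set: F].
Hypothesis F0 : [set: F] !=set0.
Hypothesis GC : continuous (fun p : F * Th => G p.1 p.2).

Definition psup (th : Th) : R := rsup [set: F] (fun f => G f th).
Definition argmax (th : Th) : set F := [set f | G f th = psup th].

Lemma slice_continuous th : continuous (fun f => G f th).
Proof.
move=> f0 A /= GA; have [[A1 A2] /= [nA1 nA2] sub] := GC (f0, th) A GA.
apply: filterS nA1 => f A1f.
exact: (sub (f, th) (conj A1f (nbhs_singleton nA2))).
Qed.

Lemma maximiser_exists th : exists c, forall f, G f th <= G c th.
Proof.
have [c _ maxc] := compact_EVT_max F0 cF
  (continuous_subspaceT (slice_continuous th)).
by exists c => f; apply: maxc; rewrite inE.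
Qed.

Lemma psup_maximiser {th : Th} {c : F} :
  (forall f, G f th <= G c th) -> psup th = G c th.
Proof. by move=> maxc; apply: rsup_max. Qed.

Lemma psup_ge f th : G f th <= psup th.
Proof.
by have [c maxc] := maximiser_exists th; rewrite (psup_maximiser maxc).
Qed.

Lemma argmax_nonempty th : argmax th !=set0.
Proof.
have [c maxc] := maximiser_exists th.
by exists c; rewrite /argmax /= (psup_maximiser maxc).
Qed.

Lemma slices_uniformly_near th0 {e : R} : 0 < e ->
  \forall th \near th0, forall f, `|G f th - G f th0| < e.
Proof.
move=> e0; have e2 : 0 < e / 2 by rewrite divr_gt0.
apply: near_forall_compact => // f1.
have /cvgrPdist_lt /(_ _ e2) [[A1 A2] /= [nA1 nA2] near_f1] := GC (f1, th0).
exists (A1, A2) => //= -[f th] /= [A1f A2th].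
have near_th := near_f1 (f, th) (conj A1f A2th).
have near_th0 := near_f1 (f, th0) (conj A1f (nbhs_singleton nA2)).
rewrite (_ : G f th - G f th0 = (G f1 th0 - G f th0) - (G f1 th0 - G f th)).
  by rewrite (splitr e); apply: le_lt_trans (ler_normB _ _) (ltrD _ _).
by ring.
Qed.

Lemma psup_continuous : continuous psup.
Proof.
move=> th0; apply/cvgrPdist_lt => e e0; have e2 : 0 < e / 2 by rewrite divr_gt0.
apply: filterS (slices_uniformly_near th0 e2) => th near_th0.
have [c maxc] := maximiser_exists th; have [c0 maxc0] := maximiser_exists th0.
rewrite (psup_maximiser maxc) (psup_maximiser maxc0).
have := maxc c0; have := maxc0 c; have := near_th0 c; have := near_th0 c0.
rewrite !ltr_norml => /andP[? ?] /andP[? ?] ? ?.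
by apply/andP; split; lra.
Qed.
End MaxOverCompact.

Section SupOverArgmax.
Context {R : realType} {F Th : topologicalType}.
Variables (G D : F -> Th -> R).
Hypothesis cF : compact [set: F].
Hypothesis F0 : [set: F] !=set0.
Hypothesis GC : continuous (fun p : F * Th => G p.1 p.2).
Hypothesis DC : continuous (fun p : F * Th => D p.1 p.2).
Variable B : R.
Hypothesis DB : forall f th, `|D f th| <= B.

Definition dsup (th : Th) : R := rsup (argmax G th) (fun f => D f th).

Lemma dsup_ge {f : F} {th : Th} : argmax G th f -> D f th <= dsup th.
Proof.
apply: rsup_ge => y _; exact: le_trans (ler_norm _) (DB _ _).
Qed.

Lemma dsup_le th M : (forall f, argmax G th f -> D f th <= M) -> dsup th <= M.
Proof. by apply: rsup_le; exact: argmax_nonempty. Qed.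

Lemma dsup_near_maximiser {th0 : Th} {f1 : F} {e : R} :
  0 < e -> argmax G th0 f1 ->
  \forall f \near f1 & p \near ((th0, 0) : Th * R), D f p.1 < dsup th0 + e.
Proof.
move=> e0 f1_max.
have /cvgrPdist_lt /(_ _ e0) [[A1 A2] /= [nA1 nA2] near_f1] := DC (f1, th0).
exists (A1, A2 `*` setT) => /=.
  by split => //; exists (A2, setT) => //=; split => //; exact: filterT.
move=> [f [th d]] /= [A1f [A2th _]].
have := dsup_ge f1_max; have := near_f1 (f, th) (conj A1f A2th).
by rewrite /= ltr_norml => /andP[? _] ?; lra.
Qed.

Lemma non_maximiser_excluded {th0 : Th} {f1 : F} : ~ argmax G th0 f1 ->
  \forall f \near f1 & p \near ((th0, 0) : Th * R),
    G f p.1 < psup G p.1 - `|p.2|.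
Proof.
move=> f1_nmax.
have gap0 : 0 < psup G th0 - G f1 th0.
  have := psup_ge G cF F0 GC f1 th0; rewrite subr_gt0 le_eqVlt.
  by case/orP => [/eqP f1_max|//]; have := f1_nmax f1_max.
(* g is the gap by which f1 fails to be a maximiser at th0; all three
   perturbations below are kept under g / 3. *)
set g := psup G th0 - G f1 th0 in gap0 *.
have g_def : g = psup G th0 - G f1 th0 by [].
have g3 : 0 < g / 3 by rewrite divr_gt0.
have /cvgrPdist_lt /(_ _ g3) [[B1 B2] /= [nB1 nB2] near_f1] := GC (f1, th0).
have /cvgrPdist_lt /(_ _ g3) near_psup := psup_continuous G cF F0 GC th0.
have small_d : \forall d \near (0 : R), `|d| < g / 3.
  by apply/nbhs_norm0P; exists (g / 3).
exists (B1, (B2 `&` [set th | `|psup G th0 - psup G th| < g / 3]) `*`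
           [set d | `|d| < g / 3]) => /=.
  split => //; exists (B2 `&` [set th | `|psup G th0 - psup G th| < g / 3],
                       [set d : R | `|d| < g / 3]) => //=.
  by split => //; exact: filterI.
move=> [f [th d]] /= [B1f [[B2th psup_th] d_small]].
have := near_f1 (f, th) (conj B1f B2th).
move: psup_th; rewrite /= !ltr_norml => /andP[? ?] /andP[? ?].
by lra.
Qed.

Lemma almost_maximisers_near th0 {e : R} : 0 < e ->
  \forall p \near ((th0, 0) : Th * R), forall f,
    psup G p.1 - `|p.2| <= G f p.1 -> D f p.1 < dsup th0 + e.
Proof.
move=> e0; apply: (near_forall_compact (nbhs ((th0, 0) : Th * R))) => // f1.
have [f1_max|f1_nmax] := pselect (argmax G th0 f1).
  by apply: filterS (dsup_near_maximiser e0 f1_max) => -[f p] /= ? _.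
by apply: filterS (non_maximiser_excluded f1_nmax) => -[f p] /= ? ?; lra.
Qed.

(* Taking d = 0 in almost_maximisers_near: dsup is upper semicontinuous. *)
Lemma dsup_usc th0 {e : R} :
  0 < e -> \forall th \near th0, dsup th <= dsup th0 + e.
Proof.
move=> e0.
have [[A1 A2] /= [nA1 nA2] near_th0] := almost_maximisers_near th0 e0.
apply: filterS nA1 => th A1th; apply: dsup_le => f f_max; apply: ltW.
apply: (near_th0 (th, 0)); first by split => //; exact: nbhs_singleton nA2.
by rewrite /= normr0 subr0 f_max.
Qed.

Lemma dsup_continuous : lsc dsup -> continuous dsup.
Proof.
move=> dsup_lsc th0; apply/cvgrPdist_lt => e e0.
have e2 : 0 < e / 2 by rewrite divr_gt0.
apply: filterS2 (dsup_usc th0 e2) (dsup_lsc th0 e e0) => th ? ?.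
by rewrite ltr_norml; apply/andP; split; lra.
Qed.

Hypothesis cTh : compact [set: Th].

Lemma almost_maximisers_uniform {e : R} :
  0 < e -> lsc dsup -> exists2 d, 0 < d &
  forall th f, psup G th - d <= G f th -> D f th < dsup th + e.
Proof.
move=> e0 dsup_lsc; have e2 : 0 < e / 2 by rewrite divr_gt0.
have : \forall d \near (0 : R), forall th f,
    psup G th - `|d| <= G f th -> D f th < dsup th + e.
  apply: (near_forall_compact (nbhs (0 : R))) => // th0.
  have [[A1 A2] /= [nA1 nA2] near_th0] := almost_maximisers_near th0 e2.
  exists (A1 `&` [set th | dsup th0 - e / 2 < dsup th], A2) => /=.
    by split => //; exact: filterI (dsup_lsc th0 _ e2).
  move=> [th d] /= [[A1th ?] A2d] f f_almost.
  by have := near_th0 (th, d) (conj A1th A2d) f f_almost; rewrite /=; lra.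
move=> /nbhs_norm0P [r r0 small_r]; exists (r / 2); first by rewrite divr_gt0.
have r2 : `|r / 2| = r / 2 by rewrite ger0_norm // divr_ge0 // ltW.
by move=> th f; rewrite -r2; apply: small_r; rewrite /= r2; move: r0 => /=; lra.
Qed.
End SupOverArgmax.

Section MaxPerturbation.
Context {R : realType} {F Th : topologicalType}.
Context {G K D : F -> Th -> R} {B t m : R}.
Hypothesis cF : compact [set: F].
Hypothesis F0 : [set: F] !=set0.
Hypothesis GC : continuous (fun p : F * Th => G p.1 p.2).
Hypothesis KC : continuous (fun p : F * Th => K p.1 p.2).
Hypothesis DB : forall f th, `|D f th| <= B.
Hypothesis t0 : 0 < t.
Hypothesis KGD : forall f th, `|K f th - G f th - t * D f th| <= t * m.

Let tq th : t * ((psup K th - psup G th) / t) = psup K th - psup G th.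
Proof. by rewrite mulrC divfK ?gt_eqF. Qed.

(* Every maximiser f of G gives t (D f - m) <= sup K - sup G. *)
Lemma quotient_lower th : dsup G D th - m <= (psup K th - psup G th) / t.
Proof.
set q := _ / t; suff : dsup G D th <= q + m by lra.
apply: dsup_le => // f f_max; rewrite -(ler_pM2l t0) mulrDr tq.
have := psup_ge K cF F0 KC f th; have := KGD f th; rewrite ler_norml.
by move: f_max; rewrite /argmax /= => ? /andP[? _] ?; lra.
Qed.

(* A maximiser c of K is a 2t(B + m)-almost maximiser of G, and
   sup K - sup G <= K c - G c <= t (D c + m). *)
Lemma quotient_upper th : exists c,
  psup G th - 2 * t * (B + m) <= G c th /\
  (psup K th - psup G th) / t <= D c th + m.
Proof.
have [c maxc] := maximiser_exists K cF F0 KC th.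
have [f1 f1_max] := argmax_nonempty G cF F0 GC th.
have tD f : - (t * B) <= t * D f th <= t * B.
  by rewrite -mulrN !ler_pM2l // -ler_norml.
exists c; split.
  have := KGD c th; have := KGD f1 th; have := maxc f1.
  have := tD c; have := tD f1; move: f1_max; rewrite /argmax /= => ?.
  by rewrite !ler_norml => /andP[? ?] /andP[? ?] ? /andP[? ?] /andP[? ?]; lra.
rewrite -(ler_pM2l t0) mulrDr tq (psup_maximiser K maxc).
have := psup_ge G cF F0 GC c th; have := KGD c th.
by rewrite ler_norml => /andP[_ ?] ?; lra.
Qed.
End MaxPerturbation.

Section Increment.
Context {R : realType} {V : normedModType R} {F Th : topologicalType}.
Variables (E : V -> F -> Th -> R) (vbar : V) (L : R).
Hypothesis Lip : forall f th v w, `|E v f th - E w f th| <= L * `|v - w|.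
Hypothesis Lin : forall f th (a : R) (u w : V),
  DeltaE E vbar (a *: u + w) f th
  = a * DeltaE E vbar u f th + DeltaE E vbar w f th.

Lemma DeltaE_norm u f th : `|DeltaE E vbar u f th| <= L * `|u|.
Proof. by have := Lip f th (vbar + u) vbar; rewrite addrAC subrr add0r. Qed.

Lemma DeltaE_continuous u :
  (forall v, continuous (fun p : F * Th => E v p.1 p.2)) ->
  continuous (fun p : F * Th => DeltaE E vbar u p.1 p.2).
Proof. by move=> EC p; apply: cvgB; exact: EC. Qed.

Lemma E_along_ray t u f th :
  E (vbar + t *: u) f th = E vbar f th + t * DeltaE E vbar u f th.
Proof.
have Delta0 : DeltaE E vbar 0 f th = 0 by rewrite /DeltaE addr0 subrr.
have := Lin f th t u 0; rewrite addr0 Delta0 addr0 /DeltaE => <-.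
by rewrite [RHS]addrC subrK.
Qed.

(* E(vbar + t u) is the perturbation of E(vbar) by t Delta(h), up to
   t L |u - h|: this is what turns Hadamard into a uniform estimate. *)
Lemma ray_perturbation t u h : 0 <= t -> forall f th,
  `|E (vbar + t *: u) f th - E vbar f th - t * DeltaE E vbar h f th|
  <= t * (L * `|u - h|).
Proof.
move=> t_ge0 f th.
have Delta_sub : DeltaE E vbar u f th - DeltaE E vbar h f th
                 = DeltaE E vbar (u - h) f th.
  have := Lin f th 1 (u - h) h; rewrite scale1r mul1r subrK => ->.
  by rewrite addrK.
rewrite E_along_ray (addrC (E vbar f th)) addrK -mulrBr Delta_sub.
by rewrite normrM ger0_norm // ler_wpM2l // DeltaE_norm.
Qed.
End Increment.

Section Hadamard.
Context {R : realType} {V : normedModType R} {F Th : pseudoMetricType R}.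
Variables (E : V -> F -> Th -> R) (vbar : V) (L : R).
Hypothesis cF : compact [set: F].
Hypothesis cTh : compact [set: Th].
Hypothesis F0 : [set: F] !=set0.
Hypothesis EC : forall v, continuous (fun p : F * Th => E v p.1 p.2).
Hypothesis L0 : 0 <= L.
Hypothesis Lip : forall f th v w, `|E v f th - E w f th| <= L * `|v - w|.
Hypothesis Lin : forall f th (a : R) (u w : V),
  DeltaE E vbar (a *: u + w) f th
  = a * DeltaE E vbar u f th + DeltaE E vbar w f th.

Lemma quotient_close (s : R) (u h : V) e d : 0 < s ->
  (forall th f, psup (E vbar) th - d <= E vbar f th ->
     DeltaE E vbar h f th < DPsi E vbar h th + e / 2) ->
  L * `|u - h| <= e / 2 -> s * (2 * (L * `|h| + e / 2)) <= d ->
  forall th, `|(PsiE E (vbar + s *: u) th - PsiE E vbar th) / s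
               - DPsi E vbar h th| <= e.
Proof.
move=> s0 almost_max m_small s_small th.
have gap := ray_perturbation E vbar L Lip Lin s u h (ltW s0).
set m := L * `|u - h| in gap m_small; clearbody m.
set q := (PsiE E (vbar + s *: u) th - PsiE E vbar th) / s.
have lower : DPsi E vbar h th - m <= q :=
  quotient_lower cF F0 (EC vbar) (EC _) s0 gap th.
have [c [c_almost c_upper]] := quotient_upper cF F0 (EC vbar) (EC _)
  (DeltaE_norm E vbar L Lip h) s0 gap th.
have upper : q <= DeltaE E vbar h c th + m := c_upper.
have Dc : DeltaE E vbar h c th < DPsi E vbar h th + e / 2.
  apply: almost_max; apply: le_trans c_almost; rewrite lerD2l lerN2.
  by apply: le_trans s_small; rewrite [2 * s]mulrC -mulrA ler_pM2l //; lra.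
by rewrite ler_norml; apply/andP; split; lra.
Qed.

Lemma hadamard_quotients (t : nat -> R) (hs : nat -> V) (h : V) :
  (forall n, 0 < t n) -> t n @[n --> \oo] --> 0 -> hs n @[n --> \oo] --> h ->
  lsc (DPsi E vbar h) ->
  unorm (fun th => (PsiE E (vbar + t n *: hs n) th - PsiE E vbar th) / t n
                   - DPsi E vbar h th) @[n --> \oo] --> 0.
Proof.
move=> t_gt0 t_to0 hs_toh DPsi_lsc; apply/cvgrPdist_le => e e0.
have e2 : 0 < e / 2 by rewrite divr_gt0.
have [d d0 almost_max] := almost_maximisers_uniform (E vbar) (DeltaE E vbar h)
  cF F0 (EC vbar) (DeltaE_continuous E vbar h EC) (L * `|h|)
  (DeltaE_norm E vbar L Lip h) cTh e2 DPsi_lsc.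
have L1 : 0 < L + 1 by rewrite (le_lt_trans L0) // ltrDl.
set C := 2 * (L * `|h| + e / 2).
have C0 : 0 < C by rewrite /C; have := mulr_ge0 L0 (normr_ge0 h); lra.
have /cvgrPdist_le /(_ (e / 2 / (L + 1))) hs_near := hs_toh.
have /cvgrPdist_le /(_ (d / C)) t_near := t_to0.
near=> n; rewrite sub0r normrN; apply: unorm_le; first exact: ltW.
apply: quotient_close almost_max _ _ => //.
  have : `|h - hs n| <= e / 2 / (L + 1).
    by near: n; apply: hs_near; rewrite divr_gt0.
  rewrite ler_pdivlMr // => /(le_trans _); apply.
  by rewrite distrC mulrC ler_wpM2l // lerDl.
have : `|0 - t n| <= d / C by near: n; apply: t_near; rewrite divr_gt0.
by rewrite sub0r normrN gtr0_norm // ler_pdivlMr // mulrC.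
Unshelve. all: end_near.
Qed.
End Hadamard.

Theorem mainTheorem17 (R : realType) (V : normedModType R)
  (F Th : pseudoMetricType R) (E : V -> F -> Th -> R) (vbar : V) (U : set V) :
  compact [set: F] -> compact [set: Th] ->
  (* (EC) *)
  (forall v, continuous (fun p : F * Th => E v p.1 p.2)) ->
  (* (Lip) *)
  (exists L : R, 0 <= L /\
     forall f th v w, `|E v f th - E w f th| <= L * `|v - w|) ->
  convex_set U ->
  (* (Lin) *)
  (forall f th (a : R) (u w : V),
     DeltaE E vbar (a *: u + w) f th
     = a * DeltaE E vbar u f th + DeltaE E vbar w f th) ->
  (* (DC) *)
  (forall h, tcone vbar U h -> lsc (DPsi E vbar h)) ->
  (* Psi maps into C(Theta), D^H Psi maps T_vbar U into C(Theta) *)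
  (forall v, continuous (PsiE E v)) /\
  (forall h, tcone vbar U h -> continuous (DPsi E vbar h)) /\
  (* Hadamard directional differentiability tangentially to U *)
  (forall (t : nat -> R) (hs : nat -> V) (h : V),
     (forall n, 0 < t n) -> {homo t : m n / (m <= n)%N >-> n <= m} ->
     t n @[n --> \oo] --> 0 ->
     hs n @[n --> \oo] --> h -> tcone vbar U h ->
     (forall n, U (vbar + t n *: hs n)) ->
     unorm (fun th => (PsiE E (vbar + t n *: hs n) th - PsiE E vbar th) / t n
                      - DPsi E vbar h th) @[n --> \oo] --> 0).
Proof.
move=> cF cTh EC [L [L0 Lip]] _ Lin DC.
have [F0|F_empty] := pselect ([set: F] !=set0); last first.
  (* With F empty every supremum is 0 and all claims are trivial. *)
  have Psi0 v : PsiE E v = cst 0 by apply/funext => th; exact: rsup_empty.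
  have DPsi0 h : DPsi E vbar h = cst 0 by apply/funext => th; exact: rsup_empty.
  split; first by move=> v; rewrite Psi0; exact: cst_continuous.
  split; first by move=> h _; rewrite DPsi0; exact: cst_continuous.
  move=> t hs h _ _ _ _ _ _; rewrite DPsi0; apply/cvgrPdist_le => e e0.
  apply: nearW => n; rewrite sub0r normrN.
  apply: unorm_le => [|th]; first exact: ltW.
  by rewrite /= !Psi0 subrr mul0r subr0 normr0 ltW.
split; first by move=> v; exact: psup_continuous (E v) cF F0 (EC v).
split.
  move=> h h_tan; exact: dsup_continuous (E vbar) (DeltaE E vbar h) cF F0
    (EC vbar) (DeltaE_continuous E vbar h EC) (L * `|h|)
    (DeltaE_norm E vbar L Lip h) (DC h h_tan).
move=> t hs h t_gt0 _ t_to0 hs_toh h_tan _.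
exact: hadamard_quotients E vbar L cF cTh F0 EC L0 Lip Lin t hs h
  t_gt0 t_to0 hs_toh (DC h h_tan).
Qed.
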